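(* Let $G$ be a parallel-edge network with pairwise distinct lengths $l_1,\dots,l_m>0$, each $f_e$ a standard response function, and let $\mathbf{x}(t)$ solve $\dot x_e = x_e\left(f_e\!\left(\mathcal{E}/l_e\right)-1\right)$ ($e\in E$), $\mathcal{E}=\left(\sum_{e\in E}x_e/l_e\right)^{-1}$, with initial condition $\mathbf{x}(0)\in\mathbb{R}^E_{>0}$ (all coordinates strictly positive). Let $i^*$ be the edge of minimum length. Then, as $t\to\infty$, $\mathcal{E}(t)\to l_{i^*}$ and $\mathbf{x}(t)\to\boldsymbol{\chi}_{i^*}$, the $i^*$-th standard basis vector of $\mathbb{R}^E$.
   Context: A parallel-edge network is a multigraph with exactly two nodes $s_0,s_1$ and edge set $E=\{1,\dots,m\}$, each edge joining $s_0$ and $s_1$, with lengths $l_e>0$. A function $f:\mathbb{R}_{\ge0}\to\mathbb{R}_{\ge0}$ is a standard response function if $f(1)=1$, $f$ is strictly increasing on $\mathbb{R}_{>0}$, and $f$ is differentiable on $\mathbb{R}_{>0}$. (This system is the specialization to parallel-edge networks of the adaptation dynamics $\dot x_e = x_e(f_e(|q_e|/x_e)-1)$, where $\mathbf{q}$ is the unit-value minimum-energy $s_0$-$s_1$ flow with edge resistances $l_e/x_e$.) *)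

From Stdlib Require Import Reals Lra.
Open Scope R_scope.

(* Finite sum over edges 0..m-1 (edges E = {0,...,m-1}). *)
Fixpoint esum (m : nat) (g : nat -> R) : R :=
  match m with
  | O => 0
  | S k => esum k g + g k
  end.

Definition standard_response (f : R -> R) : Prop :=
  (forall y, 0 <= y -> 0 <= f y) /\
  f 1 = 1 /\
  (forall a b, 0 < a -> 0 < b -> a < b -> f a < f b) /\
  (forall y, 0 < y -> exists d, derivable_pt_lim f y d).

Definition energy (m : nat) (l : nat -> R) (x : R -> nat -> R) (t : R) : R :=
  / esum m (fun e => x t e / l e).

Definition tends_at_infty (g : R -> R) (L : R) : Prop :=
  forall eps, 0 < eps -> exists T, forall t, T <= t -> Rabs (g t - L) < eps.

Definition chi (i e : nat) : R := if Nat.eqb e i then 1 else 0.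

From Stdlib Require Import Reals Lra Lia Classical.
Open Scope R_scope.

(* Write [S = / energy] for the effective conductance [sum_e x_e / l_e]; then
   [x_e' = x_e * g_e(S)] where [g_e(S) = f_e (1 / (S l_e)) - 1] is decreasing in [S] and
   vanishes at [S = 1 / l_e], so edge [e] grows exactly while [S < 1 / l_e].  Comparison
   arguments for [S'] show that [S] stays bounded away from 0 and eventually lies below
   [1 / l_istar + eta].  For [e <> istar], a suitable weight [lam] makes
   [ln x_e - lam * ln x_istar] decrease at a uniform rate on that range, and [x_istar]
   stays bounded, so [x_e -> 0].  Then [S] is eventually pushed up to [1 / l_istar] by the
   growth of [x_istar] alone, giving [S -> 1 / l_istar], [energy -> l_istar] and
   [x_istar = l_istar (S - sum_(e <> istar) x_e / l_e) -> 1]. *)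

Lemma continuity_pt_locally (h : R -> R) t : continuity_pt h t ->
  forall eps, 0 < eps ->
  exists del, 0 < del /\ forall s, Rabs (s - t) < del -> Rabs (h s - h t) < eps.
Proof.
  intros Hc eps Heps.
  destruct (Hc eps Heps) as [del [Hdel Hnear]].
  exists del; split; [lra |]. intros s Hs.
  destruct (Req_dec t s) as [<- | Hne].
  - rewrite Rminus_diag, Rabs_R0; lra.
  - apply (Hnear s); split; [split; [exact I | exact Hne] | exact Hs].
Qed.

Lemma derivable_pt_lim_continuity_pt (h : R -> R) t d :
  derivable_pt_lim h t d -> continuity_pt h t.
Proof. intros Hd; exact (derivable_continuous_pt h t (exist _ d Hd)). Qed.

Lemma continuity_pt_ge_left (h : R -> R) a t c :
  continuity_pt h t -> a < t -> (forall s, a <= s < t -> c <= h s) -> c <= h t.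
Proof.
  intros Hc Hat Hle. destruct (Rle_lt_dec c (h t)) as [| Hlt]; [assumption | exfalso].
  destruct (continuity_pt_locally h t Hc (c - h t)) as [del [Hdel Hnear]]; [lra |].
  set (s := Rmax a (t - del / 2)).
  pose proof (Rmax_l a (t - del / 2)) as Has. pose proof (Rmax_r a (t - del / 2)) as Hds.
  assert (Hst : s < t) by (apply Rmax_lub_lt; lra).
  assert (Hclose : Rabs (s - t) < del) by (apply Rabs_def1; fold s in Has, Hds; lra).
  specialize (Hnear s Hclose). apply Rabs_def2 in Hnear.
  specialize (Hle s (conj Has Hst)). lra.
Qed.

Lemma MVT_upper_bound (h h' : R -> R) a b c : a <= b ->
  (forall t, a <= t <= b -> derivable_pt_lim h t (h' t)) ->
  (forall t, a < t < b -> h' t <= c) -> h b - h a <= c * (b - a).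
Proof.
  intros [Hab | <-] Hd Hb; [| rewrite !Rminus_diag, Rmult_0_r; lra].
  destruct (MVT_cor2 h h' a b Hab Hd) as [t [-> Ht]].
  apply Rmult_le_compat_r; [lra | exact (Hb t Ht)].
Qed.

Lemma MVT_lower_bound (h h' : R -> R) a b c : a <= b ->
  (forall t, a <= t <= b -> derivable_pt_lim h t (h' t)) ->
  (forall t, a < t < b -> c <= h' t) -> c * (b - a) <= h b - h a.
Proof.
  intros [Hab | <-] Hd Hb; [| rewrite !Rminus_diag, Rmult_0_r; lra].
  destruct (MVT_cor2 h h' a b Hab Hd) as [t [-> Ht]].
  apply Rmult_le_compat_r; [lra | exact (Hb t Ht)].
Qed.

Lemma real_induction (P : R -> Prop) a :
  (exists d, 0 < d /\ forall s, a <= s < a + d -> P s) ->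
  (forall tau, a < tau -> (forall s, a <= s < tau -> P s) ->
     exists d, 0 < d /\ forall s, a <= s < tau + d -> P s) ->
  forall t, a <= t -> P t.
Proof.
  intros [d0 [Hd0 Hbase]] Hstep t Ht.
  set (B := fun u => a <= u /\ forall s, a <= s < u -> P s).
  assert (Hbound : forall s, a <= s -> ~ P s -> is_upper_bound B s).
  { intros s Has HnP u [_ Hu]. destruct (Rle_lt_dec u s) as [| Hlt]; [assumption |].
    exfalso; apply HnP, Hu; lra. }
  destruct (classic (P t)) as [| HnPt]; [assumption | exfalso].
  assert (HBd0 : B (a + d0)) by (split; [lra | exact Hbase]).
  destruct (completeness B (ex_intro _ t (Hbound t Ht HnPt)) (ex_intro _ _ HBd0))
    as [tau [Hub Hlub]].
  assert (Hd0tau : a + d0 <= tau) by exact (Hub _ HBd0).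
  assert (Hbelow : forall s, a <= s < tau -> P s).
  { intros s Hs. destruct (classic (P s)) as [| HnPs]; [assumption | exfalso].
    specialize (Hlub s (Hbound s (proj1 Hs) HnPs)); lra. }
  destruct (Hstep tau ltac:(lra) Hbelow) as [d [Hd Hext]].
  assert (HBd : B (tau + d)) by (split; [lra | exact Hext]).
  specialize (Hub _ HBd); lra.
Qed.

Lemma stays_above (h h' : R -> R) a L :
  (forall t, a <= t -> derivable_pt_lim h t (h' t)) -> L <= h a ->
  (forall t, a <= t -> h t < L -> 0 <= h' t) -> forall t, a <= t -> L <= h t.
Proof.
  intros Hd Ha Hrise t1 Ht1.
  destruct (Rle_lt_dec L (h t1)) as [| Hlt]; [assumption | exfalso].
  set (E := fun s => a <= s <= t1 /\ L <= h s).
  destruct (completeness E) as [sig [Hub Hlub]].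
  { exists t1; intros s [Hs _]; lra. }
  { exists a; split; [lra | exact Ha]. }
  assert (Hasig : a <= sig) by (apply Hub; split; [lra | exact Ha]).
  assert (Hsigt : sig <= t1) by (apply Hlub; intros s [Hs _]; lra).
  (* [h sig < L] would keep [h] below [L] near [sig], contradicting the supremum. *)
  assert (Hhsig : L <= h sig).
  { destruct (Rle_lt_dec L (h sig)) as [| Hq]; [assumption | exfalso].
    destruct (continuity_pt_locally h sig
                (derivable_pt_lim_continuity_pt _ _ _ (Hd sig Hasig)) (L - h sig))
      as [del [Hdel Hnear]]; [lra |].
    assert (Hup : is_upper_bound E (sig - del)).
    { intros s [Hs Hhs]. assert (s <= sig) by (apply Hub; split; assumption).
      destruct (Rle_lt_dec s (sig - del)) as [| Hgt]; [assumption | exfalso].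
      assert (Hclose : Rabs (s - sig) < del) by (apply Rabs_def1; lra).
      specialize (Hnear s Hclose). apply Rabs_def2 in Hnear. lra. }
    specialize (Hlub _ Hup). lra. }
  assert (Hrise_after : 0 * (t1 - sig) <= h t1 - h sig).
  { apply (MVT_lower_bound h h'); [lra | intros; apply Hd; lra |].
    intros t Ht. apply Hrise; [lra |].
    destruct (Rlt_le_dec (h t) L) as [| Hq]; [assumption | exfalso].
    assert (t <= sig) by (apply Hub; split; [lra | exact Hq]). lra. }
  lra.
Qed.

Lemma stays_below (h h' : R -> R) a L :
  (forall t, a <= t -> derivable_pt_lim h t (h' t)) -> h a <= L ->
  (forall t, a <= t -> L < h t -> h' t <= 0) -> forall t, a <= t -> h t <= L.
Proof.
  intros Hd Ha Hfall t Ht.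
  enough (- L <= - h t) by lra.
  apply (stays_above (fun s => - h s) (fun s => - h' s) a (- L)); [| lra | | exact Ht].
  - intros s Hs. exact (derivable_pt_lim_opp h s (h' s) (Hd s Hs)).
  - intros s Hs Hlt. specialize (Hfall s Hs ltac:(lra)). lra.
Qed.

Lemma eventually_below (h h' : R -> R) a L c :
  (forall t, a <= t -> derivable_pt_lim h t (h' t)) -> 0 < c ->
  (forall t, a <= t -> L < h t -> h' t <= - c) ->
  exists T, a <= T /\ forall t, T <= t -> h t <= L.
Proof.
  intros Hd Hc Hfall.
  assert (Hstay : forall s, a <= s -> h s <= L -> forall t, s <= t -> h t <= L).
  { intros s Hs Hhs. apply (stays_below h h' s L); [intros; apply Hd; lra | exact Hhs |].
    intros t Ht Hq. specialize (Hfall t ltac:(lra) Hq). lra. }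
  (* Falling at rate [c], [h] reaches [L] before time [a + |h a - L| / c + 1]. *)
  set (T := a + Rabs (h a - L) / c + 1).
  assert (HaT : a < T).
  { pose proof (Rmult_le_pos _ _ (Rabs_pos (h a - L)) (Rlt_le _ _ (Rinv_0_lt_compat _ Hc))).
    unfold T, Rdiv; lra. }
  exists T; split; [lra |].
  enough (HhT : h T <= L) by (intros t Ht; apply (Hstay T); lra).
  destruct (Rle_lt_dec (h T) L) as [| Hq]; [assumption | exfalso].
  assert (Hfell : h T - h a <= - c * (T - a)).
  { apply (MVT_upper_bound h h'); [lra | intros; apply Hd; lra |].
    intros t Ht. apply Hfall; [lra |].
    destruct (Rle_lt_dec (h t) L) as [Hle |]; [| assumption].
    specialize (Hstay t ltac:(lra) Hle T ltac:(lra)); lra. }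
  assert (Hdrop : - c * (T - a) = - Rabs (h a - L) - c) by (unfold T; field; lra).
  pose proof (Rle_abs (h a - L)). lra.
Qed.

Lemma eventually_above (h h' : R -> R) a L c :
  (forall t, a <= t -> derivable_pt_lim h t (h' t)) -> 0 < c ->
  (forall t, a <= t -> h t < L -> c <= h' t) ->
  exists T, a <= T /\ forall t, T <= t -> L <= h t.
Proof.
  intros Hd Hc Hrise.
  destruct (eventually_below (fun s => - h s) (fun s => - h' s) a (- L) c)
    as [T [HaT HT]]; [| exact Hc | |].
  - intros t Ht. exact (derivable_pt_lim_opp h t (h' t) (Hd t Ht)).
  - intros t Ht Hlt. specialize (Hrise t Ht ltac:(lra)). lra.
  - exists T; split; [exact HaT |]. intros t Ht. specialize (HT t Ht). lra.
Qed.

Lemma log_linear_decay_tends_0 (g : R -> R) T C d : 0 < d ->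
  (forall t, T <= t -> 0 < g t) -> (forall t, T <= t -> ln (g t) <= C - d * t) ->
  tends_at_infty g 0.
Proof.
  intros Hd Hpos Hln eps Heps.
  exists (Rmax T ((C - ln eps) / d + 1)). intros t Ht.
  pose proof (Rmax_l T ((C - ln eps) / d + 1)). pose proof (Rmax_r T ((C - ln eps) / d + 1)).
  assert (Hq : d * ((C - ln eps) / d) = C - ln eps) by (field; lra).
  specialize (Hln t ltac:(lra)). specialize (Hpos t ltac:(lra)).
  assert (Hlt : ln (g t) < ln eps) by nra.
  rewrite Rminus_0_r, Rabs_right by lra.
  rewrite <- (exp_ln (g t)), <- (exp_ln eps) by lra.
  apply exp_increasing, Hlt.
Qed.

Lemma tends_at_infty_plus (g h : R -> R) Lg Lh :
  tends_at_infty g Lg -> tends_at_infty h Lh ->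
  tends_at_infty (fun t => g t + h t) (Lg + Lh).
Proof.
  intros Hg Hh eps Heps.
  destruct (Hg (eps / 2)) as [Tg HTg]; [lra |].
  destruct (Hh (eps / 2)) as [Th HTh]; [lra |].
  exists (Rmax Tg Th). intros t Ht.
  pose proof (HTg t (Rle_trans _ _ _ (Rmax_l Tg Th) Ht)).
  pose proof (HTh t (Rle_trans _ _ _ (Rmax_r Tg Th) Ht)).
  replace (g t + h t - (Lg + Lh)) with ((g t - Lg) + (h t - Lh)) by ring.
  pose proof (Rabs_triang (g t - Lg) (h t - Lh)). lra.
Qed.

Lemma tends_at_infty_comp (g phi : R -> R) L :
  tends_at_infty g L -> continuity_pt phi L ->
  tends_at_infty (fun t => phi (g t)) (phi L).
Proof.
  intros Hg Hphi eps Heps.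
  destruct (continuity_pt_locally phi L Hphi eps Heps) as [del [Hdel Hnear]].
  destruct (Hg del Hdel) as [T HT].
  exists T; intros t Ht; exact (Hnear _ (HT t Ht)).
Qed.

Lemma tends_at_infty_esum m (g : nat -> R -> R) (L : nat -> R) :
  (forall e, (e < m)%nat -> tends_at_infty (g e) (L e)) ->
  tends_at_infty (fun t => esum m (fun e => g e t)) (esum m L).
Proof.
  induction m as [| k IH]; intros Hg; simpl.
  - intros eps Heps; exists 0; intros; rewrite Rminus_diag, Rabs_R0; lra.
  - apply (tends_at_infty_plus (fun t => esum k (fun e => g e t)) (g k)).
    + apply IH; intros; apply Hg; lia.
    + apply Hg; lia.
Qed.

Lemma finite_common_radius (P : nat -> R -> Prop) m :
  (forall e d d', 0 < d' <= d -> P e d -> P e d') ->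
  (forall e, (e < m)%nat -> exists d, 0 < d /\ P e d) ->
  exists d, 0 < d /\ forall e, (e < m)%nat -> P e d.
Proof.
  intros Hmon. induction m as [| k IH]; intros Hex.
  - exists 1; split; [lra | intros; lia].
  - destruct IH as [d1 [Hd1 H1]]; [intros e He; apply Hex; lia |].
    destruct (Hex k ltac:(lia)) as [d2 [Hd2 H2]].
    pose proof (Rmin_pos _ _ Hd1 Hd2) as Hmin.
    exists (Rmin d1 d2); split; [exact Hmin |]. intros e He.
    destruct (Nat.eq_dec e k) as [-> | Hne].
    + apply (Hmon k d2); [split; [exact Hmin | apply Rmin_r] | exact H2].
    + apply (Hmon e d1); [split; [exact Hmin | apply Rmin_l] | apply H1; lia].
Qed.

Lemma esum_ext m g h : (forall e, (e < m)%nat -> g e = h e) -> esum m g = esum m h.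
Proof. induction m; simpl; intros H; [reflexivity |]. rewrite IHm, H; auto. Qed.

Lemma esum_le m g h : (forall e, (e < m)%nat -> g e <= h e) -> esum m g <= esum m h.
Proof.
  induction m; simpl; intros H; [lra |].
  specialize (IHm ltac:(auto)). specialize (H m ltac:(lia)). lra.
Qed.

Lemma esum_const m c : esum m (fun _ => c) = INR m * c.
Proof. induction m; simpl esum; [simpl; ring | rewrite IHm, S_INR; ring]. Qed.

Lemma esum_nonneg m g : (forall e, (e < m)%nat -> 0 <= g e) -> 0 <= esum m g.
Proof.
  intros H. rewrite <- (Rmult_0_r (INR m)), <- esum_const. apply esum_le, H.
Qed.

Lemma esum_mulr m g k : esum m (fun e => g e * k) = esum m g * k.
Proof. induction m; simpl; [ring | rewrite IHm; ring]. Qed.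

Lemma esum_split m g i : (i < m)%nat ->
  esum m g = g i + esum m (fun e => if Nat.eqb e i then 0 else g e).
Proof.
  induction m; simpl; intros Hi; [lia |].
  destruct (Nat.eq_dec i m) as [-> | Hne].
  - rewrite Nat.eqb_refl, Rplus_0_r, Rplus_comm. f_equal.
    apply esum_ext. intros e He. destruct (Nat.eqb_spec e m); [lia | reflexivity].
  - rewrite IHm by lia. destruct (Nat.eqb_spec m i); [lia | ring].
Qed.

Lemma derivable_pt_lim_esum m (F : R -> nat -> R) dF t :
  (forall e, (e < m)%nat -> derivable_pt_lim (fun s => F s e) t (dF e)) ->
  derivable_pt_lim (fun s => esum m (F s)) t (esum m dF).
Proof.
  induction m; simpl; intros H.
  - apply derivable_pt_lim_const.
  - apply (derivable_pt_lim_plus (fun s => esum m (F s)) (fun s => F s m)); auto.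
Qed.

Section ParallelNetwork.

Variables (m : nat) (l : nat -> R) (f : nat -> R -> R) (x : R -> nat -> R) (istar : nat).

Hypothesis hl_pos : forall e, (e < m)%nat -> 0 < l e.
Hypothesis hf : forall e, (e < m)%nat -> standard_response (f e).
Hypothesis hx0 : forall e, (e < m)%nat -> 0 < x 0 e.
Hypothesis hcont0 : forall e, (e < m)%nat ->
  limit1_in (fun s => x s e) (fun s => 0 < s) (x 0 e) 0.
Hypothesis hode : forall t, 0 < t -> forall e, (e < m)%nat ->
  derivable_pt_lim (fun s => x s e) t (x t e * (f e (energy m l x t / l e) - 1)).
Hypothesis hi : (istar < m)%nat.
Hypothesis hmin : forall e, (e < m)%nat -> e <> istar -> l istar < l e.

Definition conductance t := esum m (fun e => x t e / l e).
Definition growth e s := f e (/ s / l e) - 1.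
Definition conductance_rate t := esum m (fun e => x t e / l e * growth e (conductance t)).
Definition conductance_except t :=
  esum m (fun e => if Nat.eqb e istar then 0 else x t e / l e).

Lemma growth_decreasing e s1 s2 : (e < m)%nat -> 0 < s1 -> s1 < s2 ->
  growth e s2 < growth e s1.
Proof.
  intros He Hs1 Hs12. unfold growth.
  destruct (hf e He) as [_ [_ [Hinc _]]]. pose proof (hl_pos e He) as Hl.
  assert (Hinv : / s2 < / s1) by (apply Rinv_lt_contravar; [apply Rmult_lt_0_compat |]; lra).
  assert (Hpos : 0 < / s2 / l e) by (apply Rdiv_lt_0_compat; [apply Rinv_0_lt_compat |]; lra).
  assert (Hlt : / s2 / l e < / s1 / l e)
    by (apply Rmult_lt_compat_r; [apply Rinv_0_lt_compat |]; lra).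
  specialize (Hinc _ _ Hpos (Rlt_trans _ _ _ Hpos Hlt) Hlt). lra.
Qed.

Lemma growth_nonincreasing e s1 s2 : (e < m)%nat -> 0 < s1 -> s1 <= s2 ->
  growth e s2 <= growth e s1.
Proof. intros He Hs1 [Hlt | <-]; [left; apply growth_decreasing; assumption | lra]. Qed.

Lemma growth_ge_m1 e s : (e < m)%nat -> 0 < s -> -1 <= growth e s.
Proof.
  intros He Hs. unfold growth. destruct (hf e He) as [Hnn _].
  pose proof (Hnn (/ s / l e)
    (Rlt_le _ _ (Rdiv_lt_0_compat _ _ (Rinv_0_lt_compat _ Hs) (hl_pos e He)))).
  lra.
Qed.

Lemma growth_threshold e : (e < m)%nat -> growth e (/ l e) = 0.
Proof.
  intros He. unfold growth. destruct (hf e He) as [_ [Hf1 _]]. pose proof (hl_pos e He).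
  replace (/ / l e / l e) with 1 by (field; lra). lra.
Qed.

Lemma growth_pos e s : (e < m)%nat -> 0 < s < / l e -> 0 < growth e s.
Proof.
  intros He Hs. rewrite <- (growth_threshold e He). apply growth_decreasing; tauto.
Qed.

Lemma growth_neg e s : (e < m)%nat -> / l e < s -> growth e s < 0.
Proof.
  intros He Hs. rewrite <- (growth_threshold e He).
  apply growth_decreasing; [exact He | apply Rinv_0_lt_compat, hl_pos, He | exact Hs].
Qed.

Lemma growth_continuous_threshold e : (e < m)%nat -> continuity_pt (growth e) (/ l e).
Proof.
  intros He. pose proof (hl_pos e He) as Hl.
  assert (Hf1 : continuity_pt (f e) (/ / l e / l e)).
  { replace (/ / l e / l e) with 1 by (field; lra).
    destruct (hf e He) as [_ [_ [_ Hdf]]]. destruct (Hdf 1 Rlt_0_1) as [d Hd].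
    exact (derivable_pt_lim_continuity_pt _ _ _ Hd). }
  assert (Hcomp := continuity_pt_comp (fun s => / s / l e) (f e) (/ l e)
                     ltac:(reg; apply Rinv_neq_0_compat; lra) Hf1).
  apply (continuity_pt_minus _ (fun _ => 1)) in Hcomp; [exact Hcomp | reg].
Qed.

Lemma inv_l_le_istar e : (e < m)%nat -> / l e <= / l istar.
Proof.
  intros He. destruct (Nat.eq_dec e istar) as [-> | Hne]; [lra |].
  left. apply Rinv_lt_contravar; [apply Rmult_lt_0_compat; auto | auto].
Qed.

Lemma inv_l_lt_istar e : (e < m)%nat -> e <> istar -> / l e < / l istar.
Proof. intros He Hne. apply Rinv_lt_contravar; [apply Rmult_lt_0_compat |]; auto. Qed.

Lemma x_derivable t e : 0 < t -> (e < m)%nat ->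
  derivable_pt_lim (fun s => x s e) t (x t e * growth e (conductance t)).
Proof. intros Ht He. exact (hode t Ht e He). Qed.

Lemma conductance_split t : conductance t = x t istar / l istar + conductance_except t.
Proof. exact (esum_split m (fun e => x t e / l e) istar hi). Qed.

Lemma conductance_except_nonneg t : (forall e, (e < m)%nat -> 0 < x t e) ->
  0 <= conductance_except t.
Proof.
  intros Hx. apply esum_nonneg. intros e He. destruct (Nat.eqb e istar); [lra |].
  left; apply Rdiv_lt_0_compat; auto.
Qed.

Lemma conductance_pos t : (forall e, (e < m)%nat -> 0 < x t e) -> 0 < conductance t.
Proof.
  intros Hx. rewrite conductance_split.
  pose proof (Rdiv_lt_0_compat _ _ (Hx istar hi) (hl_pos istar hi)).
  pose proof (conductance_except_nonneg t Hx). lra.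
Qed.

Lemma conductance_derivable t : 0 < t ->
  derivable_pt_lim conductance t (conductance_rate t).
Proof.
  intros Ht. apply (derivable_pt_lim_esum m (fun s e => x s e / l e)). intros e He.
  replace (x t e / l e * growth e (conductance t))
    with (x t e * growth e (conductance t) / l e) by (unfold Rdiv; ring).
  apply derivable_pt_lim_div_scal, x_derivable; assumption.
Qed.

(* Since [growth >= -1], [x t e * exp t] does not decrease while all flows stay positive. *)
Lemma x_exp_nondecreasing e s t : (e < m)%nat -> 0 < s <= t ->
  (forall u, s <= u <= t -> forall e, (e < m)%nat -> 0 < x u e) ->
  x s e * exp s <= x t e * exp t.
Proof.
  intros He Hst Hpos.
  enough (0 * (t - s) <= x t e * exp t - x s e * exp s) by lra.
  apply (MVT_lower_bound (fun u => x u e * exp u)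
           (fun u => x u e * growth e (conductance u) * exp u + x u e * exp u));
    [lra | |].
  - intros u Hu. exact (derivable_pt_lim_mult (fun u => x u e) exp u _ _
                          (x_derivable u e ltac:(lra) He) (derivable_pt_lim_exp u)).
  - intros u Hu. pose proof (Hpos u ltac:(lra)) as Hx.
    pose proof (growth_ge_m1 e (conductance u) He (conductance_pos u Hx)).
    pose proof (Rmult_lt_0_compat _ _ (Hx e He) (exp_pos u)).
    nra.
Qed.

Lemma x_pos_at_end tau : 0 < tau ->
  (forall s, 0 <= s < tau -> forall e, (e < m)%nat -> 0 < x s e) ->
  forall e, (e < m)%nat -> 0 < x tau e.
Proof.
  intros Htau Hpos e He.
  set (c := x (tau / 2) e * exp (tau / 2) / exp tau).
  assert (Hc : 0 < c).
  { apply Rdiv_lt_0_compat; [apply Rmult_lt_0_compat |]; [| apply exp_pos | apply exp_pos].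
    apply Hpos; [lra | exact He]. }
  enough (c <= x tau e) by lra.
  apply (continuity_pt_ge_left (fun s => x s e) (tau / 2));
    [exact (derivable_pt_lim_continuity_pt _ _ _ (x_derivable tau e Htau He)) | lra |].
  intros s Hs.
  pose proof (x_exp_nondecreasing e (tau / 2) s He ltac:(lra)
                (fun u Hu => Hpos u ltac:(lra))) as Hmono.
  assert (exp s <= exp tau) by (left; apply exp_increasing; lra).
  assert (0 < x s e) by (apply Hpos; [lra | exact He]).
  apply (Rmult_le_reg_r (exp tau)); [apply exp_pos |].
  unfold c, Rdiv. rewrite Rmult_assoc, Rinv_l by apply Rgt_not_eq, exp_pos. nra.
Qed.

Lemma x_pos t : 0 <= t -> forall e, (e < m)%nat -> 0 < x t e.
Proof.
  apply (real_induction (fun t => forall e, (e < m)%nat -> 0 < x t e)).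
  - destruct (finite_common_radius (fun e d => forall s, 0 <= s < d -> 0 < x s e) m)
      as [d [Hd Hnear]].
    + intros e d d' Hd' Hp s Hs; apply Hp; lra.
    + intros e He.
      destruct (hcont0 e He (x 0 e) (hx0 e He)) as [d [Hd Hnear]].
      exists d; split; [exact Hd |]. intros s [[Hs0 | <-] Hsd]; [| exact (hx0 e He)].
      assert (Hclose : R_dist s 0 < d) by (unfold R_dist; rewrite Rminus_0_r, Rabs_right; lra).
      specialize (Hnear s (conj Hs0 Hclose)). simpl in Hnear. unfold R_dist in Hnear.
      apply Rabs_def2 in Hnear. lra.
    + exists d; split; [exact Hd |]. intros s Hs e He; apply Hnear; [exact He | lra].
  - intros tau Htau Hbelow.
    pose proof (x_pos_at_end tau Htau Hbelow) as Hat.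
    destruct (finite_common_radius (fun e d => forall s, Rabs (s - tau) < d -> 0 < x s e) m)
      as [d [Hd Hnear]].
    + intros e d d' Hd' Hp s Hs; apply Hp; lra.
    + intros e He.
      destruct (continuity_pt_locally _ _
                  (derivable_pt_lim_continuity_pt _ _ _ (x_derivable tau e Htau He))
                  (x tau e) (Hat e He)) as [d [Hd Hnear]].
      exists d; split; [exact Hd |]. intros s Hs.
      specialize (Hnear s Hs). apply Rabs_def2 in Hnear. lra.
    + exists d; split; [exact Hd |]. intros s Hs e He.
      destruct (Rlt_le_dec s tau); [apply Hbelow; [lra | exact He] |].
      apply Hnear; [exact He | apply Rabs_def1; lra].
Qed.

Lemma conductance_lower_bound :
  exists c0, 0 < c0 /\ forall t, 1 <= t -> c0 <= conductance t.
Proof.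
  destruct (finite_common_radius (fun e d => d < / l e) m) as [c [Hc Hcl]].
  - intros e d d' Hd Hlt; lra.
  - intros e He. pose proof (Rinv_0_lt_compat _ (hl_pos e He)).
    exists (/ l e / 2); split; lra.
  - pose proof (conductance_pos 1 (x_pos 1 ltac:(lra))) as HS1.
    exists (Rmin (conductance 1) c); split; [apply Rmin_pos; assumption |].
    apply (stays_above conductance conductance_rate 1); [| apply Rmin_l |].
    + intros t Ht. apply conductance_derivable; lra.
    + intros t Ht Hlt. apply esum_nonneg. intros e He.
      pose proof (Rmin_r (conductance 1) c).
      pose proof (conductance_pos t (x_pos t ltac:(lra))).
      apply Rmult_le_pos.
      * left; apply Rdiv_lt_0_compat; [apply x_pos; [lra | exact He] | auto].
      * left; apply growth_pos; [exact He |]. specialize (Hcl e He). lra.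
Qed.

Lemma conductance_eventually_le eta : 0 < eta ->
  exists T, 1 <= T /\ forall t, T <= t -> conductance t <= / l istar + eta.
Proof.
  intros Heta. pose proof (Rinv_0_lt_compat _ (hl_pos istar hi)) as Hsi.
  destruct (finite_common_radius (fun e d => growth e (/ l istar + eta) <= - d) m)
    as [c [Hc Hcg]].
  - intros e d d' Hd Hle; lra.
  - intros e He. exists (- growth e (/ l istar + eta)).
    pose proof (inv_l_le_istar e He).
    pose proof (growth_neg e (/ l istar + eta) He ltac:(lra)).
    split; lra.
  - apply (eventually_below conductance conductance_rate 1 _ (c * (/ l istar + eta))).
    + intros t Ht. apply conductance_derivable; lra.
    + apply Rmult_lt_0_compat; lra.
    + intros t Ht Hgt. unfold conductance_rate.
      apply Rle_trans with (esum m (fun e => x t e / l e * - c)).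
      * apply esum_le. intros e He. apply Rmult_le_compat_l.
        -- left; apply Rdiv_lt_0_compat; [apply x_pos; [lra | exact He] | auto].
        -- apply Rle_trans with (growth e (/ l istar + eta)); [| apply Hcg, He].
           apply growth_nonincreasing; [exact He | lra | lra].
      * rewrite esum_mulr. fold (conductance t). nra.
Qed.

Lemma conductance_rate_ge t : 0 <= t ->
  x t istar / l istar * growth istar (conductance t) - conductance_except t
  <= conductance_rate t.
Proof.
  intros Ht. pose proof (x_pos t Ht) as Hx. pose proof (conductance_pos t Hx) as HS.
  unfold conductance_rate, conductance_except.
  rewrite (esum_split m (fun e => x t e / l e * growth e (conductance t)) istar hi).
  enough (Hothers :
    esum m (fun e => (if Nat.eqb e istar then 0 else x t e / l e) * -1) <=
    esum m (fun e => if Nat.eqb e istar then 0 else x t e / l e * growth e (conductance t)))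
    by (rewrite esum_mulr in Hothers; lra).
  apply esum_le. intros e He. destruct (Nat.eqb e istar); [lra |].
  apply Rmult_le_compat_l; [left; apply Rdiv_lt_0_compat; auto |].
  apply growth_ge_m1; assumption.
Qed.

(* The two edges' growth rates can be combined negatively on every conductance level
   reached eventually: below the midpoint of [/ l e] and [/ l istar] edge [istar] grows,
   above it edge [e] shrinks while [istar] barely shrinks, by continuity at its threshold. *)
Lemma growth_gap c0 e : 0 < c0 -> (e < m)%nat -> e <> istar ->
  exists lam d eta, 0 < lam /\ 0 < d /\ 0 < eta /\
    forall s, c0 <= s <= / l istar + eta -> growth e s - lam * growth istar s <= - d.
Proof.
  intros Hc0 He Hne.
  pose proof (inv_l_lt_istar e He Hne) as Hlt.
  pose proof (Rinv_0_lt_compat _ (hl_pos e He)) as Hle_pos.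
  set (mid := (/ l e + / l istar) / 2).
  set (a := growth istar mid).
  assert (Ha : 0 < a) by (apply growth_pos; [exact hi | unfold mid; lra]).
  set (d := - growth e mid / 2).
  assert (Hd : 0 < d).
  { pose proof (growth_neg e mid He ltac:(unfold mid; lra)). unfold d; lra. }
  set (K := Rabs (growth e c0)).
  pose proof (Rabs_pos (growth e c0)) as HK.
  set (lam := (K + d) / a).
  assert (Hlam : 0 < lam) by (apply Rdiv_lt_0_compat; unfold K; lra).
  assert (Hlama : lam * a = K + d) by (unfold lam; field; lra).
  destruct (continuity_pt_locally _ _ (growth_continuous_threshold istar hi) (d / lam))
    as [del [Hdel Hnear]]; [apply Rdiv_lt_0_compat; assumption |].
  exists lam, d, (del / 2). split; [exact Hlam |]. split; [exact Hd |]. split; [lra |].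
  intros s [Hs1 Hs2].
  assert (Hnear_top : - (d / lam) < growth istar (/ l istar + del / 2)).
  { assert (Hclose : Rabs (/ l istar + del / 2 - / l istar) < del) by (apply Rabs_def1; lra).
    specialize (Hnear _ Hclose). rewrite growth_threshold in Hnear by exact hi.
    apply Rabs_def2 in Hnear. lra. }
  destruct (Rlt_le_dec s mid) as [Hsmid | Hsmid].
  - assert (growth e s <= K).
    { apply Rle_trans with (growth e c0); [| apply Rle_abs].
      apply growth_nonincreasing; [exact He | exact Hc0 | exact Hs1]. }
    assert (a <= growth istar s) by (apply growth_nonincreasing; [exact hi | lra | lra]).
    nra.
  - assert (growth e s <= growth e mid).
    { apply growth_nonincreasing; [exact He | unfold mid; lra | exact Hsmid]. }
    assert (growth istar (/ l istar + del / 2) <= growth istar s).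
    { apply growth_nonincreasing; [exact hi | lra | exact Hs2]. }
    assert (Hlamd : lam * (d / lam) = d) by (field; lra).
    unfold d in *. nra.
Qed.

Lemma ln_x_derivable t e : 0 < t -> (e < m)%nat ->
  derivable_pt_lim (fun s => ln (x s e)) t (growth e (conductance t)).
Proof.
  intros Ht He. pose proof (x_pos t ltac:(lra) e He) as Hx.
  replace (growth e (conductance t))
    with (/ x t e * (x t e * growth e (conductance t))) by (field; lra).
  exact (derivable_pt_lim_comp (fun s => x s e) ln t _ _
           (x_derivable t e Ht He) (derivable_pt_lim_ln _ Hx)).
Qed.

Lemma x_vanishes e : (e < m)%nat -> e <> istar -> tends_at_infty (fun t => x t e) 0.
Proof.
  intros He Hne.
  destruct conductance_lower_bound as [c0 [Hc0 Hc0S]].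
  destruct (growth_gap c0 e Hc0 He Hne) as [lam [d [eta [Hlam [Hd [Heta Hgap]]]]]].
  destruct (conductance_eventually_le eta Heta) as [T [HT1 HT]].
  set (psi := fun t => ln (x t e) - lam * ln (x t istar)).
  assert (Hpsi : forall t, T <= t -> psi t - psi T <= - d * (t - T)).
  { intros t Ht.
    apply (MVT_upper_bound psi
             (fun u => growth e (conductance u) - lam * growth istar (conductance u)));
      [exact Ht | |].
    - intros u Hu. apply derivable_pt_lim_minus; [apply ln_x_derivable; [lra | exact He] |].
      apply derivable_pt_lim_scal, ln_x_derivable; [lra | exact hi].
    - intros u Hu. apply Hgap. split; [apply Hc0S; lra | apply HT; lra]. }
  set (B := l istar * (/ l istar + eta)).
  apply (log_linear_decay_tends_0 _ T (psi T + d * T + lam * ln B) d Hd).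
  - intros t Ht; apply x_pos; [lra | exact He].
  - intros t Ht. specialize (Hpsi t Ht).
    assert (Hpsi_t : psi t = ln (x t e) - lam * ln (x t istar)) by reflexivity.
    assert (Hxi : x t istar <= B).
    { pose proof (conductance_split t).
      pose proof (conductance_except_nonneg t (x_pos t ltac:(lra))).
      specialize (HT t Ht). pose proof (hl_pos istar hi).
      unfold B. replace (x t istar) with (l istar * (x t istar / l istar)) by (field; lra).
      apply Rmult_le_compat_l; lra. }
    assert (Hln : ln (x t istar) <= ln B).
    { destruct Hxi as [Hlt | ->]; [| lra].
      left; apply ln_increasing; [apply x_pos; [lra | exact hi] | exact Hlt]. }
    pose proof (Rmult_le_compat_l lam _ _ (Rlt_le _ _ Hlam) Hln). lra.
Qed.

Lemma conductance_except_tends : tends_at_infty conductance_except 0.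
Proof.
  rewrite <- (Rmult_0_r (INR m)), <- esum_const.
  apply (tends_at_infty_esum m (fun e t => if Nat.eqb e istar then 0 else x t e / l e)).
  intros e He. destruct (Nat.eqb_spec e istar) as [-> | Hne].
  - intros eps Heps; exists 0; intros; rewrite Rminus_diag, Rabs_R0; lra.
  - pose proof (tends_at_infty_comp _ (fun u => u / l e) 0 (x_vanishes e He Hne)
                  ltac:(reg)) as Hlim.
    unfold Rdiv in Hlim |- *. rewrite Rmult_0_l in Hlim. exact Hlim.
Qed.

Lemma conductance_eventually_ge eta : 0 < eta < / l istar ->
  exists T, forall t, T <= t -> / l istar - eta <= conductance t.
Proof.
  intros Heta.
  destruct conductance_lower_bound as [c0 [Hc0 Hc0S]].
  set (a := growth istar (/ l istar - eta)).
  assert (Ha : 0 < a) by (apply growth_pos; [exact hi | lra]).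
  set (rho := c0 * a / (2 * (a + 1))).
  assert (Hrho : 0 < rho) by (apply Rdiv_lt_0_compat; nra).
  assert (Hrho_a : rho * (a + 1) = c0 * a / 2) by (unfold rho; field; lra).
  destruct (conductance_except_tends rho Hrho) as [T0 HT0].
  pose proof (Rmax_l 1 T0). pose proof (Rmax_r 1 T0).
  destruct (eventually_above conductance conductance_rate (Rmax 1 T0) (/ l istar - eta)
              (c0 * a / 2)) as [T [_ HT]]; [| nra | | exists T; exact HT].
  - intros t Ht. apply conductance_derivable. lra.
  - intros t Ht Hlt.
    pose proof (conductance_rate_ge t ltac:(lra)) as Hrate.
    pose proof (conductance_split t) as Hsplit.
    specialize (HT0 t ltac:(lra)). rewrite Rminus_0_r in HT0. apply Rabs_def2 in HT0.
    pose proof (Hc0S t ltac:(lra)).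
    assert (Hgi : a <= growth istar (conductance t)).
    { apply growth_nonincreasing; [exact hi | | lra].
      apply conductance_pos, x_pos; lra. }
    set (y := x t istar / l istar) in *.
    assert (Hy : c0 - rho <= y) by lra.
    assert (y * a <= y * growth istar (conductance t)) by (apply Rmult_le_compat_l; nra).
    assert (0 <= (y - (c0 - rho)) * a) by (apply Rmult_le_pos; lra).
    nra.
Qed.

Lemma conductance_tends : tends_at_infty conductance (/ l istar).
Proof.
  intros eps Heps. pose proof (Rinv_0_lt_compat _ (hl_pos istar hi)) as Hsi.
  pose proof (Rmin_l (eps / 2) (/ l istar / 2)). pose proof (Rmin_r (eps / 2) (/ l istar / 2)).
  set (eta := Rmin (eps / 2) (/ l istar / 2)) in *.
  assert (Heta : 0 < eta) by (apply Rmin_pos; lra).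
  destruct (conductance_eventually_ge eta ltac:(lra)) as [T1 HT1].
  destruct (conductance_eventually_le eta Heta) as [T2 [_ HT2]].
  exists (Rmax T1 T2). intros t Ht.
  pose proof (Rmax_l T1 T2). pose proof (Rmax_r T1 T2).
  specialize (HT1 t ltac:(lra)). specialize (HT2 t ltac:(lra)).
  apply Rabs_def1; lra.
Qed.

Lemma x_istar_tends : tends_at_infty (fun t => x t istar) 1.
Proof.
  pose proof (hl_pos istar hi) as Hl.
  pose proof (tends_at_infty_plus _ _ _ _ conductance_tends
                (tends_at_infty_comp _ (fun u => - u) _ conductance_except_tends ltac:(reg)))
    as Hdiff.
  pose proof (tends_at_infty_comp _ (fun u => l istar * u) _ Hdiff ltac:(reg)) as Hlim.
  replace 1 with (l istar * (/ l istar + - 0)) by (field; lra).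
  intros eps Heps. destruct (Hlim eps Heps) as [T HT]. exists T. intros t Ht.
  replace (x t istar) with (l istar * (conductance t + - conductance_except t));
    [exact (HT t Ht) |].
  rewrite (conductance_split t). field; lra.
Qed.

End ParallelNetwork.

Theorem theorem2 (m : nat) (l : nat -> R) (f : nat -> R -> R)
  (x : R -> nat -> R) (istar : nat)
  (hl_pos : forall e, (e < m)%nat -> 0 < l e)
  (hl_dist : forall e e', (e < m)%nat -> (e' < m)%nat -> e <> e' -> l e <> l e')
  (hf : forall e, (e < m)%nat -> standard_response (f e))
  (hx0 : forall e, (e < m)%nat -> 0 < x 0 e)
  (hcont0 : forall e, (e < m)%nat ->
     limit1_in (fun s => x s e) (fun s => 0 < s) (x 0 e) 0)
  (hode : forall t, 0 < t -> forall e, (e < m)%nat ->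
     derivable_pt_lim (fun s => x s e) t
       (x t e * (f e (energy m l x t / l e) - 1)))
  (hi : (istar < m)%nat)
  (hmin : forall e, (e < m)%nat -> e <> istar -> l istar < l e) :
  tends_at_infty (energy m l x) (l istar) /\
  (forall e, (e < m)%nat -> tends_at_infty (fun t => x t e) (chi istar e)).
Proof.
  pose proof (hl_pos istar hi) as Hl.
  split.
  - rewrite <- (Rinv_inv (l istar)).
    apply (tends_at_infty_comp (conductance m l x) Rinv).
    + exact (conductance_tends m l f x istar hl_pos hf hx0 hcont0 hode hi hmin).
    + reg. apply Rinv_neq_0_compat; lra.
  - intros e He. unfold chi. destruct (Nat.eqb_spec e istar) as [-> | Hne].
    + exact (x_istar_tends m l f x istar hl_pos hf hx0 hcont0 hode hi hmin).
    + exact (x_vanishes m l f x istar hl_pos hf hx0 hcont0 hode hi hmin e He Hne).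
Qed.
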